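(* For every odometer $(X,T)$ there exists a metric $\rho$ on $X$ compatible with its topology such that $T$ has the (LRS) property with respect to $\rho$.
   Context: A dynamical system is $(X,T)$ with $X$ a compact metric space and $T\colon X\to X$ continuous. A point $x$ is regularly recurrent if for every open $U\ni x$ there is $n\geq1$ with $T^{in}(x)\in U$ for all $i\geq0$. $(X,T)$ is an odometer if it is equicontinuous (for every $\varepsilon>0$ there is $\delta>0$ with $d(x,y)<\delta\Rightarrow d(T^nx,T^ny)<\varepsilon$ for all $n\geq0$) and some regularly recurrent point has dense orbit. $T$ has the (LRS) property with respect to $\rho$ if for every $x\in X$ there is $\varepsilon_x>0$ such that $0<\rho(x,y)<\varepsilon_x$ implies $\rho(T(x),T(y))<\rho(x,y)$. *)

From HB Require Import structures.
From mathcomp Require Import all_boot all_order all_algebra.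
From mathcomp Require Import all_classical all_reals all_analysis.
Set Implicit Arguments. Unset Strict Implicit. Unset Printing Implicit Defensive.
Import Order.TTheory GRing.Theory Num.Theory.
Local Open Scope classical_set_scope.
Local Open Scope ring_scope.

(* A compact metric space is modelled as a Hausdorff (hence metric)
   pseudoMetricType X whose carrier is compact; its metric d is encoded by
   the balls: d(x,y) < e  <->  ball x e y. *)

Definition equicontinuous_sys {R : realType} {X : pseudoMetricType R}
  (T : X -> X) : Prop :=
  forall eps : R, 0 < eps -> exists2 delta : R, 0 < delta &
    forall x y : X, ball x delta y ->
      forall n : nat, ball (iter n T x) eps (iter n T y).

Definition regularly_recurrent {X : topologicalType} (T : X -> X) (x : X) :
  Prop :=
  forall U : set X, open U -> U x ->
    exists2 n : nat, (1 <= n)%N & forall i : nat, U (iter (i * n) T x).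

Definition dense_orbit {X : topologicalType} (T : X -> X) (x : X) : Prop :=
  closure (range (fun n : nat => iter n T x)) = [set: X].

Definition odometer {R : realType} {X : pseudoMetricType R} (T : X -> X) :
  Prop :=
  equicontinuous_sys T /\
  exists x : X, regularly_recurrent T x /\ dense_orbit T x.

Definition is_metric {R : realType} {X : Type} (rho : X -> X -> R) : Prop :=
  [/\ forall x y, 0 <= rho x y,
      forall x y, rho x y = 0 <-> x = y,
      forall x y, rho x y = rho y x &
      forall x y z, rho x z <= rho x y + rho y z].

Definition compatible_metric {R : realType} {X : topologicalType}
  (rho : X -> X -> R) : Prop :=
  forall A : set X, open A <->
    (forall x, A x -> exists2 e : R, 0 < e & forall y, rho x y < e -> A y).

Definition LRS {R : realType} {X : Type} (rho : X -> X -> R) (T : X -> X) :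
  Prop :=
  forall x : X, exists2 ex : R, 0 < ex &
    forall y : X, 0 < rho x y < ex -> rho (T x) (T y) < rho x y.

From HB Require Import structures.
From mathcomp Require Import all_boot all_order all_algebra.
From mathcomp Require Import all_classical all_reals all_analysis.
From mathcomp Require Import zify ring lra.
Import Order.TTheory GRing.Theory Num.Theory.
Local Open Scope classical_set_scope.
Local Open Scope ring_scope.
Set Implicit Arguments. Unset Strict Implicit. Unset Printing Implicit Defensive.

(* An odometer is an inverse limit of finite rotations.  If x0 has a dense,
   regularly recurrent orbit and T is equicontinuous, the closures of the
   orbit pieces {T^(t + i n) x0 | i} depend only on t modulo a period q_n and
   partition X into q_n clopen sets cyclically permuted by T; taking n along
   strides adapted to the modulus of equicontinuity, these partitions are
   nested and their mesh tends to 0.  After passing to a subsequence, the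
   number of pieces either stabilises (then X is discrete and LRS is vacuous)
   or at least triples at each level.  If x and y lie in the same piece up to
   level l and no further, a distance between 1/(l+1) and 2/(l+1) gives a
   compatible metric; its correction term decreases along T, even across a
   carry of the odometer. *)

Definition invS (R : realType) (k : nat) : R := (k.+1%:R)^-1.

Section InvS.
Variable R : realType.

Lemma invS_gt0 k : 0 < invS R k.
Proof. by rewrite /invS invr_gt0 ltr0n. Qed.

Lemma invS_le a b : (a <= b)%N -> invS R b <= invS R a.
Proof. by move=> ab; rewrite /invS lef_pV2 ?posrE ?ltr0n // ler_nat ltnS. Qed.

Lemma invS_lt a b : (a < b)%N -> invS R b < invS R a.
Proof. by move=> ab; rewrite /invS ltf_pV2 ?posrE ?ltr0n // ltr_nat ltnS. Qed.

Lemma invS_small (e : R) : 0 < e -> exists j, invS R j < e.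
Proof.
move=> e0; have /archi_boundP : 0 <= e^-1 by rewrite invr_ge0 ltW.
set k := Num.Def.archi_bound _ => hk; exists k.
rewrite /invS -[e]invrK ltf_pV2 ?posrE ?invr_gt0 ?ltr0n //.
by rewrite (lt_trans hk) // ltr_nat.
Qed.

End InvS.

Lemma closure_ballP (R : realType) (X : pseudoMetricType R) (S : set X) y :
  closure S y <-> forall e : R, 0 < e -> exists z, S z /\ ball y e z.
Proof.
split=> [Sy e e0|H B /nbhs_ballP [e /= e0 yeB]].
  by have [z [Sz yez]] := Sy _ (nbhsx_ballx y e e0); exists z.
by have [z [Sz yez]] := H e e0; exists z; split => //; exact: yeB.
Qed.

Lemma hausdorff_ball_eq (R : realType) (X : pseudoMetricType R) (x y : X) :
  hausdorff_space X -> (forall e : R, 0 < e -> ball x e y) -> x = y.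
Proof. by move=> hX xy; apply: (close_eq hX); rewrite ball_close => e; exact: xy. Qed.

Lemma bounded_homo_eventually_constant (u : nat -> nat) B :
  {homo u : i j / (i <= j)%N} -> (forall j, (u j <= B)%N) ->
  exists J, forall j, (J <= j)%N -> u j = u J.
Proof.
move=> u_homo uB; suff: forall d J, (B - u J <= d)%N ->
    exists J', forall j, (J' <= j)%N -> u j = u J' by apply; exact: (leqnn (B - u 0%N)).
elim=> [|d IH] J hd.
  by exists J => j Jj; have := uB j; have := u_homo _ _ Jj; lia.
have [|/existsNP [j /not_implyP [Jj ne]]] :=
  pselect (forall j, (J <= j)%N -> u j = u J); first by exists J.
by apply: (IH j); have := uB j; have := u_homo _ _ Jj; lia.
Qed.

Lemma unbounded_homo_tripling (u : nat -> nat) :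
  {homo u : i j / (i <= j)%N} -> (forall b, exists j, (b < u j)%N) ->
  exists phi : nat -> nat, [/\ phi 0%N = 0%N, forall k, (phi k < phi k.+1)%N &
    forall k, (3 * u (phi k) <= u (phi k.+1))%N].
Proof.
move=> u_homo /choice [g gP].
pose phi := fix phi k := if k is k'.+1 then g (3 * u (phi k'))%N else 0%N.
have phi3 k : (3 * u (phi k) < u (phi k.+1))%N by exact: gP.
exists phi; split=> // [k|k]; last exact: ltnW.
rewrite ltnNge; apply/negP => /u_homo; have := phi3 k; lia.
Qed.

Definition eventually_constant (m : nat -> nat) : Prop :=
  exists J, forall j, (J <= j)%N -> m j = m J.

Definition at_least_tripling (m : nat -> nat) : Prop :=
  forall k, (3 * m k <= m k.+1)%N.


(* c j x is the position of x in a cycle of m j clopen sets permuted by T: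
   a presentation of (X, T) as the inverse limit of the rotations of
   Z/(m j), j in nat. *)
Record odometer_coding (R : realType) (X : pseudoMetricType R) (T : X -> X)
    (m : nat -> nat) (c : nat -> X -> nat) : Prop := OdometerCoding {
  coding_m0 : m 0%N = 1%N;
  coding_m_gt0 : forall j, (0 < m j)%N;
  coding_lt : forall j x, (c j x < m j)%N;
  coding_T : forall j x, c j (T x) = ((c j x).+1 %% m j)%N;
  coding_dvd : forall j, (m j %| m j.+1)%N;
  coding_mod : forall j x, (c j.+1 x %% m j)%N = c j x;
  coding_locally_constant : forall j x,
    exists2 e : R, 0 < e & forall y, ball x e y -> c j y = c j x;
  coding_mesh : forall x (e : R), 0 < e ->
    exists j, forall y, c j y = c j x -> ball x e y }.

Section CodingTheory.
Variables (R : realType) (X : pseudoMetricType R) (T : X -> X).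
Variables (m : nat -> nat) (c : nat -> X -> nat).
Hypothesis cod : odometer_coding T m c.

Lemma coding_dvd_le j k : (j <= k)%N -> (m j %| m k)%N.
Proof.
elim: k => [|k IH]; first by rewrite leqn0 => /eqP ->.
rewrite leq_eqVlt ltnS => /predU1P [-> //|/IH jk].
exact: dvdn_trans jk (coding_dvd cod k).
Qed.

Lemma coding_homo : {homo m : j k / (j <= k)%N}.
Proof. by move=> j k jk; apply: dvdn_leq (coding_m_gt0 cod k) (coding_dvd_le jk). Qed.

Lemma coding_mod_le j k x : (j <= k)%N -> (c k x %% m j)%N = c j x.
Proof.
elim: k => [|k IH]; first by rewrite leqn0 => /eqP ->; rewrite modn_small ?(coding_lt cod).
rewrite leq_eqVlt ltnS => /predU1P [-> |jk]; first by rewrite modn_small ?(coding_lt cod).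
by rewrite -(IH jk) -(coding_mod cod k x) (modn_dvdm _ (coding_dvd_le jk)).
Qed.

Lemma coding_eq_le j k x y : (j <= k)%N -> c k x = c k y -> c j x = c j y.
Proof. by move=> jk cxy; rewrite -(coding_mod_le x jk) -(coding_mod_le y jk) cxy. Qed.

Lemma coding0 x : c 0%N x = 0%N.
Proof. by have := coding_lt cod 0 x; rewrite (coding_m0 cod) ltnS leqn0 => /eqP. Qed.

Lemma coding_inj x y : hausdorff_space X -> (forall j, c j x = c j y) -> x = y.
Proof.
move=> hX cxy; apply: hausdorff_ball_eq => // e e0.
by have [j xej] := coding_mesh cod x e0; exact/xej.
Qed.

Lemma coding_top_mod j k : (j <= k)%N -> ((m k).-1 %% m j)%N = (m j).-1.
Proof.
move=> jk; have /dvdnP [t mk] := coding_dvd_le jk.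
have mj0 := coding_m_gt0 cod j.
have t0 : (0 < t)%N by have := coding_m_gt0 cod k; rewrite mk muln_gt0 => /andP [].
rewrite mk; have -> : (t * m j).-1 = (t.-1 * m j + (m j).-1)%N by nia.
by rewrite modnMDl modn_small // prednK.
Qed.

Lemma coding_comp (phi : nat -> nat) : phi 0%N = 0%N ->
  (forall k, (phi k < phi k.+1)%N) -> odometer_coding T (m \o phi) (fun k => c (phi k)).
Proof.
move=> phi0 phi_lt; have phi_ge k : (k <= phi k)%N.
  by elim: k => // k IH; exact: leq_ltn_trans IH (phi_lt k).
split=> [|j|j x|j x|j|j x|j x|x e e0] /=.
- by rewrite phi0 (coding_m0 cod).
- exact: coding_m_gt0 cod (phi j).
- exact: coding_lt cod (phi j) x.
- exact: coding_T cod (phi j) x.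
- exact/coding_dvd_le/ltnW.
- exact/coding_mod_le/ltnW.
- exact: coding_locally_constant cod (phi j) x.
have [j xej] := coding_mesh cod x e0; exists j => y cxy.
exact/xej/(coding_eq_le (phi_ge j)).
Qed.

Lemma coding_subseq_growth : exists m' c', odometer_coding T m' c' /\
  (eventually_constant m' \/ at_least_tripling m').
Proof.
have [[B mB]|mB] := pselect (exists B, forall j, (m j <= B)%N).
  exists m, c; split=> //; left.
  exact: bounded_homo_eventually_constant coding_homo mB.
have m_unbounded b : exists j, (b < m j)%N.
  apply: contrapT => nb; apply: mB; exists b => j.
  by rewrite leqNgt; apply/negP => bj; apply: nb; exists j.
have [phi [phi0 phi_lt phi3]] := unbounded_homo_tripling coding_homo m_unbounded.
by exists (m \o phi), (fun k => c (phi k)); split; [exact: coding_comp|right].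
Qed.

End CodingTheory.

Lemma transfer_arith n N u v w e : (0 < n)%N -> (0 < N)%N ->
  (e + u = w + v %[mod n])%N ->
  exists k M i, (M + u = w + k * (n * N) /\ M + v = e + i * n)%N.
Proof.
move=> n0 N0 euwv; have kk : (u + e <= (u + e) * (n * N))%N.
  by rewrite leq_pmulr // muln_gt0 n0.
set K := ((u + e) * (n * N))%N in kk; pose M := (w + K - u)%N.
have Mu : (M + u = w + K)%N by rewrite /M subnK //; lia.
have Mv : (M + v = e %[mod n])%N.
  apply/eqP; rewrite -(eqn_modDr u) addnAC Mu -addnA [(K + v)%N]addnC addnA.
  by rewrite -modnDmr /K mulnCA modnMr addn0 euwv.
have /dvdnP [i Mi] : (n %| M + v - e)%N.
  by rewrite -eqn_mod_dvd ?Mv //; rewrite /M; lia.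
by exists (u + e)%N, M, i; split=> //; rewrite -Mi subnKC //; rewrite /M; lia.
Qed.

Section Cylinders.
Variables (R : realType) (X : pseudoMetricType R) (T : X -> X) (x0 : X).
Hypothesis equiT : equicontinuous_sys T.
Hypothesis recx0 : regularly_recurrent T x0.
Hypothesis densex0 : dense_orbit T x0.

Local Notation o a := (iter a T x0).

Lemma uniform_return (e : R) : 0 < e ->
  exists2 N, (0 < N)%N & forall i a, ball (o a) e (o (a + i * N)%N).
Proof.
move=> e0; have [d d0 equid] := equiT e0.
have [N N0 x0N] : exists2 N, (1 <= N)%N & forall i, (ball x0 d)° (o (i * N)%N).
  by apply: recx0; [exact: open_interior|exact: nbhsx_ballx].
exists N => // i a; rewrite iterD.
exact: equid (interior_subset (x0N i)) a.
Qed.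

(* For n > 0 these closed sets cover X, T maps cyl n t into cyl n t.+1, and
   cyl n t only depends on t modulo the least period [period n] of x0, so that
   they partition X. *)
Definition cyl (n t : nat) : set X := closure (range (fun i => o (t + i * n)%N)).

(* T^M, for M congruent to a - r, sends the orbit point near y at time r + i n
   near z (recurrence along multiples of n N) and the one at time s + j n to
   a time congruent to e modulo n. *)
Lemma cyl_transfer n r s a e y z : (0 < n)%N ->
  cyl n r y -> cyl n s y -> cyl n a z -> (e + r = a + s %[mod n])%N ->
  cyl n e z.
Proof.
move=> n0 ry sy az ers; apply/closure_ballP => eta eta0.
have eta3 : 0 < eta / 3 by rewrite divr_gt0.
have [d d0 equid] := equiT eta3.
have [N N0 retN] := uniform_return eta3.
have d2 : 0 < d / 2 by rewrite divr_gt0.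
have [_ [[p _ <-] zp]] := (iffLR (closure_ballP _ _) az) _ eta3.
have [_ [[i _ <-] yi]] := (iffLR (closure_ballP _ _) ry) _ d2.
have [_ [[j _ <-] yj]] := (iffLR (closure_ballP _ _) sy) _ d2.
have ij : ball (o (r + i * n)%N) d (o (s + j * n)%N).
  by have := ball_triangle (ball_sym yi) yj; rewrite -splitr.
have [k [M [i' [Mi Mj]]]] : exists k M i',
    (M + (r + i * n) = a + p * n + k * (n * N) /\ M + (s + j * n) = e + i' * n)%N.
  apply: transfer_arith => //.
  have -> : (e + (r + i * n) = i * n + (e + r))%N by ring.
  have -> : (a + p * n + (s + j * n) = (p + j) * n + (a + s))%N by ring.
  by rewrite !modnMDl.
exists (o (e + i' * n)%N); split; first by exists i'.
have := equid _ _ ij M; rewrite -!iterD Mi Mj => far.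
have := retN (k * n)%N (a + p * n)%N; rewrite -mulnA => near.
rewrite (_ : eta = eta / 3 + eta / 3 + eta / 3); last by field.
exact: ball_triangle (ball_triangle zp near) far.
Qed.

Lemma cyl_x0 n : cyl n 0 x0.
Proof. by apply: subset_closure; exists 0%N. Qed.

Lemma cyl_nx0 n : (0 < n)%N -> cyl n n x0.
Proof.
by move=> n0; apply: (cyl_transfer n0 (cyl_x0 n) (cyl_x0 n) (cyl_x0 n)); rewrite modnDl.
Qed.

Lemma cyl_T n t y : cyl n t y -> cyl n t.+1 (T y).
Proof.
move=> ty; apply/closure_ballP => e e0; have [d d0 equid] := equiT e0.
have [_ [[i _ <-] yi]] := (iffLR (closure_ballP _ _) ty) _ d0.
by exists (o (t.+1 + i * n)%N); split; [exists i|exact: equid yi 1%N].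
Qed.

Lemma cyl_cover n y : (0 < n)%N -> exists2 t, (t < n)%N & cyl n t y.
Proof.
move=> n0; have : closure (range (fun a => o a)) y by rewrite densex0.
suff : closure (range (fun a => o a)) `<=` \bigcup_(t in `I_n) cyl n t.
  by move=> /[apply] -[t]; exists t.
rewrite [X in _ `<=` X](closure_id _).1; last first.
  by apply: closed_bigcup => [|t _]; [exact: finite_II|exact: closed_closure].
apply: closureS => _ [a _ <-]; exists (a %% n)%N; first exact: ltn_pmod.
by apply: subset_closure; exists (a %/ n)%N => //; rewrite addnC -divn_eq.
Qed.

Definition period n : nat :=
  match pselect (exists t, (0 < t)%N && `[< cyl n t x0 >]) with
  | left ex_t => ex_minn ex_t
  | right _ => 1%N
  end.

Lemma periodP n : (0 < n)%N -> [/\ (0 < period n)%N, cyl n (period n) x0 &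
  forall t, (0 < t)%N -> cyl n t x0 -> (period n <= t)%N].
Proof.
move=> n0; rewrite /period; case: pselect => [ex_t|]; last first.
  by case; exists n; rewrite n0; apply/asboolP; exact: cyl_nx0.
case: ex_minnP => q /andP [q0 /asboolP qx0] qmin; split=> // t t0 tx0.
by apply: qmin; rewrite t0; apply/asboolP.
Qed.

Lemma cyl_addp n a z : (0 < n)%N -> cyl n a z -> cyl n (a + period n) z.
Proof.
move=> n0 az; have [_ px0 _] := periodP n0.
by apply: (cyl_transfer n0 (cyl_x0 n) px0 az); rewrite addn0.
Qed.

Lemma cyl_subp n a z : (0 < n)%N -> cyl n (a + period n) z -> cyl n a z.
Proof.
move=> n0 apz; have [_ px0 _] := periodP n0.
by apply: (cyl_transfer n0 px0 (cyl_x0 n) apz); rewrite addn0.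
Qed.

Lemma cyl_modp n a z : (0 < n)%N -> cyl n a z <-> cyl n (a %% period n) z.
Proof.
move=> n0; rewrite {1}(divn_eq a (period n)) addnC.
elim: (a %/ period n)%N => [|b IH]; first by rewrite mul0n addn0.
rewrite mulSn addnCA addnC; split=> [/(cyl_subp n0)/IH //|/IH].
exact: cyl_addp.
Qed.

Lemma period_dvd n t : (0 < n)%N -> cyl n t x0 -> (period n %| t)%N.
Proof.
move=> n0 /(cyl_modp _ _ n0) tx0; have [p0 _ pmin] := periodP n0.
apply: contraT; rewrite /dvdn -lt0n => t_p0.
by have := pmin _ t_p0 tx0; rewrite leqNgt ltn_pmod.
Qed.

(* Transferring y from the times r, s to x0 at time 0 shows that x0 returns
   at time s + (n - 1) r, a multiple of the period, as is n. *)
Lemma cyl_eq_modp n r s y : (0 < n)%N -> cyl n r y -> cyl n s y ->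
  (r = s %[mod period n])%N.
Proof.
move=> n0 ry sy; have srn : (s + n.-1 * r + r = s + n * r)%N.
  by rewrite -addnA -mulSnr prednK.
have /(period_dvd n0) p_srn : cyl n (s + n.-1 * r) x0.
  apply: (cyl_transfer n0 ry sy (cyl_x0 n)).
  by rewrite add0n srn addnC mulnC modnMDl.
have p_nr : (period n %| n * r)%N.
  exact/dvdn_mulr/(period_dvd n0)/cyl_nx0.
have -> : (r %% period n = (s + n.-1 * r + r) %% period n)%N.
  by rewrite -modnDml (eqP p_srn) add0n.
by rewrite srn -modnDmr (eqP p_nr) addn0.
Qed.

Definition cyl_index n y : nat := xget 0%N [set t | (t < period n)%N /\ cyl n t y].

Lemma cyl_indexP n y : (0 < n)%N -> (cyl_index n y < period n)%N /\ cyl n (cyl_index n y) y.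
Proof.
move=> n0; apply: (@xgetPex _ 0%N [set t | (t < period n)%N /\ cyl n t y]).
have [t _ ty] := cyl_cover y n0.
have [p0 _ _] := periodP n0.
by exists (t %% period n)%N; split; [exact: ltn_pmod|exact: (cyl_modp _ _ n0).1].
Qed.

Lemma cyl_indexE n y t : (0 < n)%N -> cyl n t y -> cyl_index n y = (t %% period n)%N.
Proof.
move=> n0 ty; have [yp yy] := cyl_indexP y n0.
by rewrite -(cyl_eq_modp n0 yy ty) modn_small.
Qed.

Lemma cyl_index_T n y : (0 < n)%N ->
  cyl_index n (T y) = ((cyl_index n y).+1 %% period n)%N.
Proof. by move=> n0; apply/cyl_indexE/cyl_T => //; have [] := cyl_indexP y n0. Qed.

Lemma cyl_index_locally_constant n y : (0 < n)%N -> exists2 e : R, 0 < e &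
  forall y', ball y e y' -> cyl_index n y' = cyl_index n y.
Proof.
move=> n0; pose others := \bigcup_(t in `I_(period n) `\ cyl_index n y) cyl n t.
have : closed others.
  by apply: closed_bigcup => [|t _]; [exact/finite_setD/finite_II|exact: closed_closure].
have y_others : (~` others) y.
  by move=> [t [tp nt] /(cyl_indexE n0) ty]; apply: nt; rewrite /= ty modn_small.
rewrite -openC openE => /(_ y y_others) /nbhs_ballP [e /= e0 y_e_others].
exists e => // y' yy'; apply: contrapT => ne; apply: (y_e_others _ yy').
by have [y'p y'y'] := cyl_indexP y' n0; exists (cyl_index n y').
Qed.

Lemma cyl_mul n N t z : cyl (n * N) t z -> cyl n t z.
Proof.
by apply: closureS => _ [i _ <-]; exists (i * N)%N => //; rewrite mulnAC mulnA.
Qed.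

Lemma period_dvd_mul n N : (0 < n)%N -> (0 < N)%N -> (period n %| period (n * N))%N.
Proof.
move=> n0 N0; have nN0 : (0 < n * N)%N by rewrite muln_gt0 n0.
by have [_ /cyl_mul px0 _] := periodP nN0; exact: period_dvd.
Qed.

Lemma cyl_index_mul n N y : (0 < n)%N -> (0 < N)%N ->
  (cyl_index (n * N) y %% period n)%N = cyl_index n y.
Proof.
move=> n0 N0; have nN0 : (0 < n * N)%N by rewrite muln_gt0 n0.
by have [_ /cyl_mul yy] := cyl_indexP y nN0; rewrite (cyl_indexE n0 yy).
Qed.

Lemma period1 : period 1 = 1%N.
Proof. by apply/eqP; rewrite -dvdn1; exact: period_dvd (cyl_nx0 _). Qed.

Lemma cyl_index_ball n (e : R) y z : (0 < n)%N -> 0 < e ->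
  (forall i a, ball (o a) e (o (a + i * n)%N)) ->
  cyl_index n y = cyl_index n z -> ball y (e + e + e + e) z.
Proof.
move=> n0 e0 ret yz; have [_ yy] := cyl_indexP y n0; have [_ zz] := cyl_indexP z n0.
rewrite yz in yy; set t := cyl_index n z in yy zz.
have [_ [[i _ <-] yi]] := (iffLR (closure_ballP _ _) yy) _ e0.
have [_ [[j _ <-] zj]] := (iffLR (closure_ballP _ _) zz) _ e0.
have yt := ball_triangle yi (ball_sym (ret i t)).
exact: ball_triangle (ball_triangle yt (ret j t)) (ball_sym zj).
Qed.

Section Strides.
Variable N : nat -> nat.
Hypothesis N_gt0 : forall j, (0 < N j)%N.
Hypothesis N_return : forall j i a, ball (o a) (invS R j) (o (a + i * N j)%N).

Definition stride j : nat := \prod_(i < j) N i.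

Lemma stride_gt0 j : (0 < stride j)%N.
Proof. by rewrite prodn_gt0. Qed.

Lemma strideS j : stride j.+1 = (stride j * N j)%N.
Proof. by rewrite /stride big_ord_recr. Qed.

Lemma stride_coding :
  odometer_coding T (fun j => period (stride j)) (fun j => cyl_index (stride j)).
Proof.
split=> [|j|j x|j x|j|j x|j x|x e e0].
- by rewrite /stride big_ord0 period1.
- by have [] := periodP (stride_gt0 j).
- by have [] := cyl_indexP x (stride_gt0 j).
- exact: cyl_index_T (stride_gt0 j).
- by rewrite strideS period_dvd_mul ?stride_gt0.
- by rewrite strideS cyl_index_mul ?stride_gt0.
- exact: cyl_index_locally_constant (stride_gt0 j).
have [j je] : exists j, invS R j < e / 4 by apply: invS_small; rewrite divr_gt0.
have ret i a : ball (o a) (invS R j) (o (a + i * stride j.+1)%N).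
  by rewrite strideS mulnA.
exists j.+1 => y xy.
apply: le_ball (cyl_index_ball (stride_gt0 j.+1) (invS_gt0 R j) ret (esym xy)).
by have := invS_gt0 R j; lra.
Qed.

End Strides.

Lemma odometer_coding_exists : exists m c, odometer_coding T m c.
Proof.
have /choice [N NP] j : exists N, (0 < N)%N /\
    forall i a, ball (o a) (invS R j) (o (a + i * N)%N).
  by have [N N0 ret] := uniform_return (invS_gt0 R j); exists N.
exists (fun j => period (stride N j)), (fun j => cyl_index (stride N j)).
by apply: stride_coding => j; have [] := NP j.
Qed.

End Cylinders.

Section CodingMetric.
Variables (R : realType) (X : pseudoMetricType R) (T : X -> X).
Variables (m : nat -> nat) (c : nat -> X -> nat).
Hypothesis hX : hausdorff_space X.
Hypothesis cod : odometer_coding T m c.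

Definition agree_level (x y : X) : nat :=
  match pselect (exists j, c j.+1 x != c j.+1 y) with
  | left ex_j => ex_minn ex_j
  | right _ => 0%N
  end.

Lemma agree_levelxx x : agree_level x x = 0%N.
Proof.
rewrite /agree_level; case: pselect => // ex_j; exfalso.
by case: ex_j => j; rewrite eqxx.
Qed.

Lemma agree_levelP x y : x <> y ->
  (forall i, (i <= agree_level x y)%N -> c i x = c i y) /\
  c (agree_level x y).+1 x != c (agree_level x y).+1 y.
Proof.
move=> nxy; rewrite /agree_level; case: pselect => [ex_j|nj]; last first.
  case: nxy; apply: (coding_inj cod) => // -[|j]; first by rewrite !(coding0 cod).
  by apply/eqP/negPn/negP => ne; apply: nj; exists j.
case: ex_minnP => k ne kmin; split=> // -[|i] ik; first by rewrite !(coding0 cod).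
by apply/eqP/negPn/negP => /kmin; rewrite leqNgt ik.
Qed.

Lemma agree_level_le x y i : x <> y -> c i x = c i y <-> (i <= agree_level x y)%N.
Proof.
move=> nxy; have [agree differ] := agree_levelP nxy; split=> [cxy|]; last exact: agree.
rewrite leqNgt; apply/negP => lt_i; move/eqP: differ; apply.
exact: (coding_eq_le cod lt_i cxy).
Qed.

Lemma agree_level_eq x y k : x <> y -> c k x = c k y -> c k.+1 x != c k.+1 y ->
  agree_level x y = k.
Proof.
move=> nxy cxy ne; apply/eqP; rewrite eqn_leq (iffLR (agree_level_le _ nxy) cxy) andbT.
by rewrite leqNgt; apply: contra ne => lt_k; apply/eqP/(agree_level_le _ nxy).
Qed.

Lemma agree_levelC x y : agree_level x y = agree_level y x.
Proof.
have [->//|nxy] := pselect (x = y); have nyx : y <> x by move/esym.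
have [agree differ] := agree_levelP nyx.
by apply: agree_level_eq => //; [exact/esym/agree|rewrite eq_sym].
Qed.

Lemma coding_T_eq j x y : c j (T x) = c j (T y) <-> c j x = c j y.
Proof.
rewrite !(coding_T cod); split=> [|-> //].
move/eqP; rewrite -addn1 -[(c j y).+1]addn1 eqn_modDr.
by rewrite !modn_small ?(coding_lt cod) // => /eqP.
Qed.

Lemma agree_level_T x y : x <> y ->
  T x <> T y /\ agree_level (T x) (T y) = agree_level x y.
Proof.
move=> nxy; have [agree differ] := agree_levelP nxy.
have nTxy : T x <> T y.
  by move=> Txy; move/eqP: differ; apply; apply/coding_T_eq; rewrite Txy.
split=> //; apply: agree_level_eq => //; first exact/coding_T_eq/agree.
by apply: contra differ => /eqP /coding_T_eq ->.
Qed.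

Definition ratio k : nat := m k.+1 %/ m k.
Definition digit k x : nat := c k.+1 x %/ m k.

Lemma ratioK k : (ratio k * m k)%N = m k.+1.
Proof. exact: divnK (coding_dvd cod k). Qed.

Lemma codingE k x : c k.+1 x = (digit k x * m k + c k x)%N.
Proof. by rewrite {1}(divn_eq (c k.+1 x) (m k)) (coding_mod cod). Qed.

Lemma digit_lt k x : (digit k x < ratio k)%N.
Proof. by rewrite ltn_divLR ?(coding_m_gt0 cod) // ratioK (coding_lt cod). Qed.

Lemma coding_T_nocarry k x : ((c k x).+1 < m k)%N ->
  c k (T x) = (c k x).+1 /\ digit k (T x) = digit k x.
Proof.
move=> nocarry; split; first by rewrite (coding_T cod) modn_small.
rewrite [digit k (T x)]/digit (coding_T cod) codingE -addnS modn_small; last first.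
  by rewrite -ratioK; have := digit_lt k x; nia.
by rewrite divnMDl ?(coding_m_gt0 cod) // divn_small // addn0.
Qed.

Definition top_ind (r s s' : nat) : nat :=
  (((s == r.-1) || (s' == r.-1)) + (s + s' == r.*2 - 3))%N.

Lemma top_ind_le2 r s s' : (top_ind r s s' <= 2)%N.
Proof. by rewrite /top_ind; case: (_ || _); case: (_ == _). Qed.

Lemma top_indC r s s' : top_ind r s s' = top_ind r s' s.
Proof. by rewrite /top_ind orbC [(s + s')%N]addnC. Qed.

Lemma top_ind_carry r s : (3 <= r)%N -> (s < r.-1)%N ->
  top_ind r r.-1 s = (top_ind r 0 s.+1).+1.
Proof.
move=> r3 sr; rewrite /top_ind eqxx /= add0n.
have -> : (0 == r.-1) = false by apply/eqP; lia.
have -> : (s.+1 == r.*2 - 3)%N = false by apply/eqP; lia.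
rewrite addn0 /=; have [->|ns] := eqVneq s r.-2.
  have -> : r.-2.+1 == r.-1 by apply/eqP; lia.
  by have -> : (r.-1 + r.-2 == r.*2 - 3)%N by apply/eqP; lia.
have -> : (s.+1 == r.-1) = false by apply/eqP; lia.
by have -> : (r.-1 + s == r.*2 - 3)%N = false by apply/eqP; lia.
Qed.

Definition to_carry k x : nat := ((m k).-1 - c k x)%N.

(* For x <> y agreeing up to level l and no further, odo_dist x y lies in
   [1/(l+1), 2/(l+1)).  The correction frac l decreases along T: to_carry l x
   drops by one unless level l carries, and when it does, the level-(l+1)
   digits (r - 1, s) of x and y become (0, s + 1), so that top_ind drops by one,
   which outweighs to_carry l (T x) / m l < 1.  The second summand of top_ind
   flags the pair {r - 1, r - 2}, which keeps the drop when s + 1 = r - 1, and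
   r >= 3 prevents it from flagging (0, s + 1). *)
Definition frac k x y : R :=
  ((top_ind (ratio k) (digit k x) (digit k y))%:R + (to_carry k x)%:R / (m k)%:R) / 3.

Definition odo_dist x y : R :=
  if pselect (x = y) then 0
  else invS R (agree_level x y) * (1 + frac (agree_level x y) x y).

Lemma frac_ge0 k x y : 0 <= frac k x y.
Proof. by rewrite /frac divr_ge0 // addr_ge0 // divr_ge0. Qed.

Lemma frac_lt1 k x y : frac k x y < 1.
Proof.
have top2 : (top_ind (ratio k) (digit k x) (digit k y))%:R <= 2 :> R.
  by rewrite (ler_nat R _ 2) top_ind_le2.
have carry1 : (to_carry k x)%:R / (m k)%:R < 1 :> R.
  rewrite ltr_pdivrMr ?ltr0n ?(coding_m_gt0 cod) // mul1r ltr_nat /to_carry.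
  by have := coding_m_gt0 cod k; lia.
rewrite /frac ltr_pdivrMr // mul1r; lra.
Qed.

Lemma odo_distE x y : x <> y ->
  odo_dist x y = invS R (agree_level x y) * (1 + frac (agree_level x y) x y).
Proof. by rewrite /odo_dist; case: pselect. Qed.

Lemma odo_distxx x : odo_dist x x = 0.
Proof. by rewrite /odo_dist; case: pselect. Qed.

Lemma odo_dist_bounds x y : x <> y ->
  invS R (agree_level x y) <= odo_dist x y < 2 * invS R (agree_level x y).
Proof.
move=> nxy; rewrite odo_distE //; set l := agree_level x y.
have := frac_ge0 l x y; have := frac_lt1 l x y; have := invS_gt0 R l.
set w := invS R l; set f := frac l x y => w0 f1 f0.
by apply/andP; split; nra.
Qed.

Lemma odo_dist_ge0 x y : 0 <= odo_dist x y.
Proof.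
have [->|nxy] := pselect (x = y); first by rewrite odo_distxx.
by have /andP [+ _] := odo_dist_bounds nxy; apply/le_trans/ltW/invS_gt0.
Qed.

Lemma odo_dist_neq x y : 0 < odo_dist x y -> x <> y.
Proof. by move=> + exy; rewrite exy odo_distxx ltxx. Qed.

Lemma odo_dist_eq0 x y : odo_dist x y = 0 <-> x = y.
Proof.
split=> [xy0|->]; last exact: odo_distxx.
apply: contrapT => nxy; have /andP [+ _] := odo_dist_bounds nxy.
by rewrite xy0 leNgt invS_gt0.
Qed.

Lemma frac_congr k x y x' y' : c k x = c k x' -> c k.+1 x = c k.+1 x' ->
  c k.+1 y = c k.+1 y' -> frac k x y = frac k x' y'.
Proof. by move=> ck ckx cky; rewrite /frac /digit /to_carry ck ckx cky. Qed.

Lemma frac_sym k x y : c k x = c k y -> frac k x y = frac k y x.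
Proof. by move=> ck; rewrite /frac top_indC /to_carry ck. Qed.

Lemma odo_distC x y : odo_dist x y = odo_dist y x.
Proof.
have [->//|nxy] := pselect (x = y); have nyx : y <> x by move/esym.
rewrite !odo_distE // agree_levelC; congr (_ * (1 + _)); apply: frac_sym.
by have [agree _] := agree_levelP nyx; exact/esym/agree.
Qed.

Lemma odo_dist_agree x y z : x <> y -> x <> z ->
  (agree_level x y < agree_level y z)%N -> odo_dist x z = odo_dist x y.
Proof.
move=> nxy nxz lt_yz; have [axy dxy] := agree_levelP nxy.
have nyz : y <> z by move=> eyz; move: lt_yz; rewrite eyz agree_levelxx.
have [ayz _] := agree_levelP nyz.
have ayz1 := ayz _ lt_yz; have ayz0 := ayz _ (ltnW lt_yz).
have lxz : agree_level x z = agree_level x y.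
  by apply: agree_level_eq => //; [rewrite axy|rewrite -ayz1].
by rewrite !odo_distE // lxz; congr (_ * (1 + _)); apply: frac_congr.
Qed.

(* As for an ultrametric: if the levels of (x, y) and (y, z) differ, then
   odo_dist x z is one of the two distances; otherwise both are at least
   1/(l+1), while odo_dist x z < 2/(l+1). *)
Lemma odo_dist_triangle x y z : odo_dist x z <= odo_dist x y + odo_dist y z.
Proof.
have [->|nxy] := pselect (x = y); first by rewrite odo_distxx add0r.
have [->|nyz] := pselect (y = z); first by rewrite odo_distxx addr0.
have [->|nxz] := pselect (x = z).
  by rewrite odo_distxx addr_ge0 ?odo_dist_ge0.
have := odo_dist_ge0 x y; have := odo_dist_ge0 y z => yz0 xy0.
have [lt_xy|lt_yx|eq_l] := ltngtP (agree_level x y) (agree_level y z).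
- by rewrite (odo_dist_agree nxy nxz lt_xy) lerDl.
- have nzy : z <> y by move/esym.
  have nzx : z <> x by move/esym.
  rewrite (agree_levelC y) (agree_levelC x) in lt_yx.
  by rewrite odo_distC (odo_dist_agree nzy nzx lt_yx) [odo_dist z y]odo_distC lerDr.
have le_xz : (agree_level x y <= agree_level x z)%N.
  apply/(agree_level_le _ nxz); have [axy _] := agree_levelP nxy.
  by have [ayz _] := agree_levelP nyz; rewrite axy // ayz ?eq_l.
have /andP [_ xz2] := odo_dist_bounds nxz; have /andP [xy1 _] := odo_dist_bounds nxy.
have /andP [yz1 _] := odo_dist_bounds nyz; have := invS_le R le_xz.
rewrite -eq_l in yz1; lra.
Qed.

Lemma odo_dist_is_metric : is_metric odo_dist.
Proof.
split; [exact: odo_dist_ge0|exact: odo_dist_eq0|exact: odo_distC|].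
exact: odo_dist_triangle.
Qed.

Lemma agree_level_ge x y J : x <> y -> odo_dist x y < invS R J ->
  (J <= agree_level x y)%N.
Proof.
move=> nxy xyJ; have /andP [xy1 _] := odo_dist_bounds nxy.
by rewrite leqNgt; apply/negP => /(invS_lt R); lra.
Qed.

Lemma odo_dist_compatible : compatible_metric odo_dist.
Proof.
move=> A; split=> [oA x Ax|Aopen].
  have /nbhs_ballP [e /= e0 xeA] : nbhs x A by move: oA; rewrite openE; apply.
  have [j xj] := coding_mesh cod x e0; exists (invS R j) => [|y xyj].
    exact: invS_gt0.
  have [<-//|nxy] := pselect (x = y).
  by apply/xeA/xj/esym/(agree_level_le _ nxy)/(agree_level_ge nxy).
rewrite openE => x /Aopen [e e0 xeA]; apply/nbhs_ballP.
have [j je] := invS_small (divr_gt0 e0 (ltr0n R 2)).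
have [d d0 xdj] := coding_locally_constant cod j x.
exists d => // y /xdj cy; apply: xeA.
have [<-|nxy] := pselect (x = y); first by rewrite odo_distxx.
have le_j : (j <= agree_level x y)%N by apply/(agree_level_le _ nxy).
have /andP [_ xy2] := odo_dist_bounds nxy; have := invS_le R le_j; lra.
Qed.

Lemma frac_T_nocarry k x y : ((c k x).+1 < m k)%N -> c k x = c k y ->
  frac k (T x) (T y) < frac k x y.
Proof.
move=> nocarry cxy; have [Tx dTx] := coding_T_nocarry nocarry.
have [Ty dTy] : c k (T y) = (c k y).+1 /\ digit k (T y) = digit k y.
  by apply: coding_T_nocarry; rewrite -cxy.
rewrite /frac dTx dTy ltr_pM2r ?invr_gt0 // ltrD2l.
rewrite ltr_pM2r ?invr_gt0 ?ltr0n ?(coding_m_gt0 cod) //.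
by rewrite ltr_nat /to_carry Tx; lia.
Qed.

Lemma frac_T_carry k x y : (3 * m k <= m k.+1)%N ->
  c k x = (m k).-1 -> c k.+1 x = (m k.+1).-1 -> c k x = c k y ->
  c k.+1 x != c k.+1 y -> frac k (T x) (T y) < frac k x y.
Proof.
move=> m3 topx topx1 cxy dxy; have m0 := coding_m_gt0 cod k.
have r3 : (3 <= ratio k)%N by move: m3; rewrite -ratioK; nia.
have dx : digit k x = (ratio k).-1.
  by move: topx1; rewrite codingE topx -ratioK; nia.
have dy : (digit k y < (ratio k).-1)%N.
  have : digit k y != digit k x.
    by apply: contra dxy => /eqP dyx; rewrite !codingE dyx cxy.
  by rewrite dx; have := digit_lt k y; lia.
have Tx : c k (T x) = 0%N by rewrite (coding_T cod) topx prednK ?modnn.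
have dTx : digit k (T x) = 0%N.
  by rewrite /digit (coding_T cod) topx1 prednK ?modnn ?div0n // (coding_m_gt0 cod).
have dTy : digit k (T y) = (digit k y).+1.
  have cTy : c k.+1 (T y) = ((digit k y).+1 * m k)%N.
    rewrite (coding_T cod) codingE -cxy topx -addnS prednK // -mulSnr modn_small //.
    by rewrite -ratioK ltn_mul2r m0; lia.
  by rewrite [digit k (T y)]/digit cTy mulnK.
rewrite /frac dTx dTy dx top_ind_carry // /to_carry Tx topx subnn subn0.
rewrite ltr_pM2r ?invr_gt0 // mul0r addr0 -natr1 ltrD2l.
by rewrite ltr_pdivrMr ?ltr0n // mul1r ltr_nat prednK.
Qed.

Lemma odo_dist_T_lt x y : x <> y ->
  frac (agree_level x y) (T x) (T y) < frac (agree_level x y) x y ->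
  odo_dist (T x) (T y) < odo_dist x y.
Proof.
move=> nxy fT; have [nTxy lT] := agree_level_T nxy.
by rewrite !odo_distE // lT ltr_pM2l ?invS_gt0 // ltrD2l.
Qed.

Lemma coding_eventually_constant_inj J x y :
  (forall j, (J <= j)%N -> m j = m J) -> c J x = c J y -> x = y.
Proof.
move=> mJ cJ; apply: (coding_inj cod) => // j.
have [jJ|Jj] := leqP j J; first exact: (coding_eq_le cod jJ cJ).
have cjJ z : c j z = c J z.
  by rewrite -(coding_mod_le cod z (ltnW Jj)) -(mJ j (ltnW Jj)) modn_small ?(coding_lt cod).
by rewrite !cjJ.
Qed.

Lemma odo_dist_LRS : eventually_constant m \/ at_least_tripling m -> LRS odo_dist T.
Proof.
move=> growth x; case: growth => [[J mJ]|m3].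
  exists (invS R J) => [|y /andP [/odo_dist_neq nxy xyJ]]; first exact: invS_gt0.
  have cJ : c J x = c J y by apply/(agree_level_le _ nxy)/(agree_level_ge nxy).
  by case: nxy; exact: (coding_eventually_constant_inj mJ cJ).
have [[J xJ]|xtop] := pselect (exists J, c J x != (m J).-1).
  exists (invS R J) => [|y /andP [/odo_dist_neq nxy xyJ]]; first exact: invS_gt0.
  have [agree _] := agree_levelP nxy; have lJ := agree_level_ge nxy xyJ.
  apply: odo_dist_T_lt => //; apply: frac_T_nocarry; last exact: agree.
  rewrite ltn_neqAle (coding_lt cod) andbT; apply: contra xJ => /eqP top.
  by rewrite -(coding_mod_le cod x lJ) -(coding_top_mod cod lJ) -top.
have top j : c j x = (m j).-1 by apply/eqP/negPn/negP => ne; apply: xtop; exists j.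
exists 1 => // y /andP [/odo_dist_neq nxy _].
have [agree differ] := agree_levelP nxy.
by apply: odo_dist_T_lt => //; apply: frac_T_carry => //; exact: agree.
Qed.

End CodingMetric.

Theorem corollary3p3 (R : realType) (X : pseudoMetricType R)
  (hX : hausdorff_space X) (cX : compact [set: X])
  (T : X -> X) (cT : continuous T) (odo : odometer T) :
  exists rho : X -> X -> R,
    [/\ is_metric rho, compatible_metric rho & LRS rho T].
Proof.
case: odo => equiT [x0 [recx0 densex0]].
have [m [c cod]] := odometer_coding_exists equiT recx0 densex0.
have [m' [c' [cod' growth]]] := coding_subseq_growth cod.
exists (odo_dist m' c'); split.
- exact: odo_dist_is_metric hX cod'.
- exact: odo_dist_compatible hX cod'.
- exact: odo_dist_LRS hX cod' growth.
Qed.
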